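(* Let $A_1$ and $A_2$ be finite-dimensional simple evolution algebras over a field $\mathbb{K}$ with associated directed graphs $E$ and $F$ (relative to natural bases). Let $d_1$ (resp. $d_2$) be the greatest common divisor of the lengths of all closed paths in $E$ (resp. $F$). Then: \begin{enumerate} \item[(i)] The evolution algebra $A_1\otimes A_2$ is simple if and only if $\gcd(d_1,d_2)=1$. In particular, if $E$ and $F$ have closed paths of coprime lengths, then $A_1\otimes A_2$ is simple. \item[(ii)] The evolution algebra $A_1\otimes A_2$ is semisimple, i.e. a direct sum of simple evolution algebras. \end{enumerate}
   Context: An evolution algebra over $\mathbb{K}$ is a $\mathbb{K}$-algebra with a basis $\{e_1,\dots,e_n\}$ (natural basis) such that $e_ie_j=0$ for $i\ne j$; its structure matrix $(\omega_{ij})$ is given by $e_i^2=\sum_j\omega_{ji}e_j$. Its associated directed graph relative to this basis has vertex set $\{1,\dots,n\}$ and an edge from $i$ to $j$ whenever $\omega_{ji}\neq0$. A path is a finite sequence of edges $f_1\cdots f_m$ with the range of $f_i$ equal to the source of $f_{i+1}$; it is closed if its range equals its source; its length is $m$. The tensor product $A_1\otimes A_2$ of evolution algebras with natural bases $\{a_i\}$, $\{b_p\}$ is an evolution algebra with natural basis $\{a_i\otimes b_p\}$ and product $(a\otimes b)(a'\otimes b')=aa'\otimes bb'$. A $\mathbb{K}$-algebra is simple if $A^2\neq 0$ and its only ideals are $0$ and $A$. *)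

From HB Require Import structures.
From mathcomp Require Import all_boot all_order all_algebra.
Set Implicit Arguments.
Unset Strict Implicit.
Unset Printing Implicit Defensive.
Import GRing.Theory.
Local Open Scope ring_scope.

Section AlgebraNotions.
Variables (K : fieldType) (V : lmodType K) (mul : V -> V -> V).

Definition is_subspace (S : V -> Prop) : Prop :=
  [/\ S 0, (forall x y, S x -> S y -> S (x + y))
        & (forall (a : K) x, S x -> S (a *: x))].

Definition is_ideal_in (J S : V -> Prop) : Prop :=
  [/\ is_subspace S, (forall x, S x -> J x)
    & (forall x y, J x -> S y -> S (mul x y) /\ S (mul y x))].

Definition is_ideal (S : V -> Prop) : Prop := is_ideal_in (fun _ => True) S.

Definition simple_in (J : V -> Prop) : Prop :=
  (exists x y, [/\ J x, J y & mul x y <> 0]) /\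
  (forall S, is_ideal_in J S ->
     (forall x, S x -> x = 0) \/ (forall x, J x -> S x)).

Definition simple_algebra : Prop := simple_in (fun _ => True).

Definition evolution_in (J : V -> Prop) : Prop :=
  exists (m : nat) (b : 'I_m -> V),
    [/\ (forall t, J (b t)),
        (forall c : 'I_m -> K, \sum_(t < m) c t *: b t = 0 -> forall t, c t = 0),
        (forall x, J x -> exists c : 'I_m -> K, x = \sum_(t < m) c t *: b t)
      & (forall s t, s != t -> mul (b s) (b t) = 0)].

Definition direct_sum_decomposition (k : nat) (J : 'I_k -> V -> Prop) : Prop :=
  [/\ (forall t, is_ideal (J t)),
      (forall x, exists y : 'I_k -> V, (forall t, J t (y t)) /\ x = \sum_(t < k) y t)
    & (forall y : 'I_k -> V, (forall t, J t (y t)) ->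
         \sum_(t < k) y t = 0 -> forall t, y t = 0)].

Definition semisimple_evolution : Prop :=
  exists (k : nat) (J : 'I_k -> V -> Prop),
    direct_sum_decomposition J /\ (forall t, simple_in (J t) /\ evolution_in (J t)).

End AlgebraNotions.

(* ---------- Evolution algebras given by a natural basis indexed by a
   finite type I and structure matrix W: e_i^2 = \sum_j W j i e_j.
   The algebra is K^I = {ffun I -> K^o}, e_i the i-th unit vector, so
   (x y)_j = \sum_i W j i x_i y_i. ---------- *)
Section Evolution.
Variables (K : fieldType).

Definition evo_mul (I : finType) (W : I -> I -> K) (x y : {ffun I -> K^o})
  : {ffun I -> K^o} := [ffun j => \sum_i W j i * (x i * y i)].

Definition evo_simple (I : finType) (W : I -> I -> K) : Prop :=
  @simple_algebra K {ffun I -> K^o} (evo_mul W).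

Definition evo_semisimple (I : finType) (W : I -> I -> K) : Prop :=
  @semisimple_evolution K {ffun I -> K^o} (evo_mul W).

(* structure matrix of the tensor product w.r.t. the natural basis
   a_i (x) b_p: (a_i (x) b_p)^2 = \sum_{j,q} W1 j i W2 q p (a_j (x) b_q) *)
Definition evo_tensor (I1 I2 : finType) (W1 : I1 -> I1 -> K) (W2 : I2 -> I2 -> K)
  : (I1 * I2)%type -> (I1 * I2)%type -> K :=
  fun jq ip => W1 jq.1 ip.1 * W2 jq.2 ip.2.

Definition evo_edge (I : finType) (W : I -> I -> K) (i j : I) : Prop := W j i <> 0.

Definition closed_path_length (I : finType) (W : I -> I -> K) (m : nat) : Prop :=
  exists v : nat -> I,
    [/\ (0 < m)%N, v m = v 0%N
      & forall k, (k < m)%N -> evo_edge W (v k) (v k.+1)].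

End Evolution.

Definition is_gcd_of (P : nat -> Prop) (d : nat) : Prop :=
  (forall m, P m -> (d %| m)%N) /\
  (forall e, (forall m, P m -> (e %| m)%N) -> (e %| d)%N).

(* An evolution algebra with structure matrix [W] is simple iff its squares [e_i^2] (the columns
   of [W]) span it and its graph is strongly connected: a nonzero element of an ideal produces some
   [e_i^2], and multiplying by [e_j] propagates it along the edges.  The tensor product has the
   product graph, whose walks are pairs of walks of equal length.  Walks [i -> j] and [p -> q] of
   lengths [a] and [b] can be traded for walks of a common length as soon as
   [a = b mod gcd(d1, d2)], since the differences of closed-walk lengths at [i] and at [p] form a
   subgroup of [Z] containing [gcd(d1, d2) Z].  So the product graph is strongly connected iff
   [gcd(d1, d2) = 1], and reachability in it is always symmetric, so its strongly connected
   components split the tensor product into simple evolution ideals. *)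

Set Warnings "-notation-overridden,-ambiguous-paths,-deprecated".
From HB Require Import structures.
From mathcomp Require Import all_boot all_order all_algebra boolp.
From mathcomp Require Import ring zify.
Set Implicit Arguments.
Unset Strict Implicit.
Unset Printing Implicit Defensive.
Import GRing.Theory.

Inductive walk {T : Type} (e : T -> T -> Prop) : T -> T -> nat -> Prop :=
| walk0 v : walk e v v 0
| walkS u v w n : e u v -> walk e v w n -> walk e u w n.+1.

Section Walks.
Variables (T : Type) (e : T -> T -> Prop).

Definition strongly_connected := forall u v, exists n, walk e u v n.

Definition closed_walk_length (m : nat) := (0 < m)%N /\ exists v, walk e v v m.

Lemma walk_cat u v w a b : walk e u v a -> walk e v w b -> walk e u w (a + b).
Proof. by elim=> // x y z n exy _ IH /IH; rewrite addSn; apply: walkS. Qed.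

Lemma walk_rcons u v w n : walk e u v n -> e v w -> walk e u w n.+1.
Proof. by move=> uv vw; rewrite -addn1; apply: walk_cat uv (walkS vw (walk0 e w)). Qed.

Lemma walk0_inv u w : walk e u w 0 -> u = w.
Proof. by move=> H; inversion H. Qed.

Lemma walkS_inv u w n : walk e u w n.+1 -> exists2 v, e u v & walk e v w n.
Proof. by move=> H; inversion H; subst; eauto. Qed.

Lemma sub_walk (e' : T -> T -> Prop) u v n :
  (forall x y, e x y -> e' x y) -> walk e u v n -> walk e' u v n.
Proof. by move=> ee'; elim=> [x|x y z m /ee' e'xy _]; [apply: walk0|apply: walkS]. Qed.

Lemma walk_fun u w n : walk e u w n <->
  exists f : nat -> T, [/\ f 0%N = u, f n = w & forall k, (k < n)%N -> e (f k) (f k.+1)].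
Proof.
split.
  elim=> [v|x y z m exy _ [f [f0 fm fe]]]; first by exists (fun=> v).
  exists (fun k => if k is k'.+1 then f k' else x); split=> //.
  by case=> [|k] /=; rewrite ltnS => ltkm; [rewrite f0 | apply: fe].
elim: n u => [|n IH] u [f [<- fn fe]]; first by rewrite -fn; apply: walk0.
apply: (walkS (fe 0%N isT)); apply: IH.
by exists (f \o S); split=> // k; apply: (fe k.+1).
Qed.

Lemma closed_walk_gt0 :
  strongly_connected -> (forall v, exists u, e u v) ->
  forall v, exists2 n, (0 < n)%N & walk e v v n.
Proof.
move=> sc ine v; have [u uv] := ine v; have [n vu] := sc v u.
by exists n.+1 => //; apply: walk_rcons vu uv.
Qed.

(* Walking from [i] to [v] and back turns a closed walk at [v] into one at [i]. *)
Lemma dvdn_closed_walks g i : strongly_connected ->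
  (forall m, walk e i i m -> (g %| m)%N) ->
  forall v m, walk e v v m -> (g %| m)%N.
Proof.
move=> sc gi v m vv; have [a iv] := sc i v; have [b vi] := sc v i.
have := gi _ (walk_cat (walk_cat iv vv) vi).
by rewrite -addnA addnCA dvdn_addl //; apply: gi; apply: walk_cat iv vi.
Qed.

Lemma gcd_dvdn_closed_walk d v m :
  is_gcd_of closed_walk_length d -> walk e v v m -> (d %| m)%N.
Proof.
case=> dvd _; case: m => [|m] vv; first exact: dvdn0.
by apply: dvd; split=> //; exists v.
Qed.

End Walks.

Section IntSubgroup.
Local Open Scope ring_scope.
Variable X : int -> Prop.
Hypotheses (X0 : X 0) (XD : forall x y, X x -> X y -> X (x + y)).

Lemma submonoid_mul_nat z (n : nat) : X z -> X (z * n%:Z).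
Proof.
by move=> Xz; rewrite -natz mulr_natr; elim: n => [|n IH]; rewrite ?mulr0n // mulrS; apply: XD.
Qed.

(* [-z] is [(t - 1) z + (-t) z] for [z >= 0], and [(s - 1) z + s (-z)] for [z < 0]. *)
Lemma submonoid_oppr (s t : nat) : (0 < s)%N -> (0 < t)%N -> X s -> X (- t%:Z) ->
  forall z, X z -> X (- z).
Proof.
move=> s_gt0 t_gt0 Xs Xt [] n Xz.
  have -> : - n%:Z = n%:Z * (t.-1)%:Z + (- t%:Z) * n%:Z by rewrite predn_int //; ring.
  by apply: XD; apply: submonoid_mul_nat.
have -> : - Negz n = Negz n * (s.-1)%:Z + s%:Z * n.+1%:Z.
  by rewrite NegzE predn_int //; ring.
by apply: XD; apply: submonoid_mul_nat.
Qed.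

Hypothesis XN : forall x, X x -> X (- x).

Lemma subgroup_mulr z k : X z -> X (z * k).
Proof.
move=> Xz; case: k => n; first exact: submonoid_mul_nat.
by rewrite NegzE mulrN; apply: XN; apply: submonoid_mul_nat.
Qed.

(* The generator is the least positive element: the remainder of any element by it lies in [X]. *)
Lemma subgroup_int_dvdz (s : nat) : (0 < s)%N -> X s ->
  exists g : nat, forall z, X z <-> (g %| z)%Z.
Proof.
move=> s_gt0 Xs.
have ex_pos : exists n, `[< X n%:Z >] && (0 < n)%N by exists s; rewrite s_gt0 andbT; apply/asboolP.
case: (ex_minnP ex_pos) => g /andP[/asboolP Xg g_gt0] g_min.
exists g => z; split; last by case/dvdzP=> k ->; rewrite mulrC; apply: subgroup_mulr.
move=> Xz; apply/dvdz_mod0P.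
have Xr : X (z %% g)%Z.
  by rewrite /modz -mulNr; apply: XD => //; rewrite mulrC; apply: subgroup_mulr.
have g_pos : 0 < g%:Z by rewrite ltz_nat.
have g_ne0 : g%:Z != 0 by rewrite eqz_nat -lt0n.
case: (z %% g)%Z Xr (modz_ge0 z g_ne0) (ltz_pmod z g_pos) => [[|r]|r] // Xr _ ltrg.
have : (g <= r.+1)%N by apply: g_min; rewrite andbT; apply/asboolP.
by rewrite leqNgt -ltz_nat ltrg.
Qed.
End IntSubgroup.

Section ProductGraph.
Variables (T1 T2 : Type) (e1 : T1 -> T1 -> Prop) (e2 : T2 -> T2 -> Prop).
Local Open Scope ring_scope.

Definition prod_rel (x y : T1 * T2) : Prop := e1 x.1 y.1 /\ e2 x.2 y.2.

Lemma walk_prod x y n : walk prod_rel x y n <-> walk e1 x.1 y.1 n /\ walk e2 x.2 y.2 n.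
Proof.
split.
  elim=> [v|u v w m [e1uv e2uv] _ [IH1 IH2]]; first by split; apply: walk0.
  by split; [apply: walkS e1uv IH1 | apply: walkS e2uv IH2].
case: x y => [i p] [j q] /= [ij]; elim: ij p => [v|u v w m e1uv _ IH] p pq.
  by rewrite (walk0_inv pq); apply: walk0.
by have [p' e2pp' p'q] := walkS_inv pq; apply: (walkS (v := (v, p'))); last exact: IH.
Qed.

Variables (d1 d2 : nat).
Hypotheses (gcd1 : is_gcd_of (closed_walk_length e1) d1)
  (gcd2 : is_gcd_of (closed_walk_length e2) d2).

Lemma prod_strongly_connected_gcd (i0 : T1) (p0 : T2) :
  (forall v, exists u, e2 u v) -> strongly_connected prod_rel -> gcdn d1 d2 = 1%N.
Proof.
move=> in2 sc; have [p' p'p0] := in2 p0.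
have [L /walk_prod [/= ii pp']] := sc (i0, p0) (i0, p').
have D1 := dvdn_trans (dvdn_gcdl d1 d2) (gcd_dvdn_closed_walk gcd1 ii).
have := dvdn_trans (dvdn_gcdr d1 d2) (gcd_dvdn_closed_walk gcd2 (walk_rcons pp' p'p0)).
by rewrite -addn1 dvdn_addr // dvdn1 => /eqP.
Qed.

Hypotheses (sc1 : strongly_connected e1) (sc2 : strongly_connected e2)
  (in1 : forall v, exists u, e1 u v) (in2 : forall v, exists u, e2 u v).

(* The differences of closed-walk lengths at [i] and at [p] form a subgroup [g Z] of [Z]; since
   closed walks at [i] (resp. [p]) have lengths divisible by [g], so have all closed walks, whence
   [g] divides [gcdn d1 d2] and every difference [b - a] is realised. *)
Lemma walks_same_length i j p q a b : walk e1 i j a -> walk e2 p q b ->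
  a = b %[mod gcdn d1 d2] -> exists L, walk e1 i j L /\ walk e2 p q L.
Proof.
move=> ij pq eq_ab.
pose X (z : int) := exists x y : nat, [/\ walk e1 i i x, walk e2 p p y & z = x%:Z - y%:Z].
have X0 : X 0 by exists 0%N, 0%N; split; try exact: walk0.
have XD z z' : X z -> X z' -> X (z + z').
  move=> [x [y [ii pp ->]]] [x' [y' [ii' pp' ->]]].
  exists (x + x')%N, (y + y')%N; split; [exact: walk_cat ii ii'|exact: walk_cat pp pp'|].
  by rewrite !PoszD; ring.
have [s s_gt0 ii] := closed_walk_gt0 sc1 in1 i.
have [t t_gt0 pp] := closed_walk_gt0 sc2 in2 p.
have Xs : X s by exists s, 0%N; split; [exact: ii | exact: walk0 | exact/esym/subr0].
have Xt : X (- t%:Z) by exists 0%N, t; split; [exact: walk0 | exact: pp | exact/esym/sub0r].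
have [g Xg] := subgroup_int_dvdz X0 XD (submonoid_oppr X0 XD s_gt0 t_gt0 Xs Xt) s_gt0 Xs.
have g_d1 : (g %| d1)%N.
  apply: (proj2 gcd1) => m [_ [v vv]]; apply: (dvdn_closed_walks (i := i) sc1 _ vv) => x ix.
  by apply/(Xg x); exists x, 0%N; split; [exact: ix | exact: walk0 | exact/esym/subr0].
have g_d2 : (g %| d2)%N.
  apply: (proj2 gcd2) => m [_ [v vv]]; apply: (dvdn_closed_walks (i := p) sc2 _ vv) => y py.
  have /Xg : X (- y%:Z) by exists 0%N, y; split; [exact: walk0 | exact: py | exact/esym/sub0r].
  by rewrite dvdzE abszN.
have : X (b%:Z - a%:Z).
  apply/Xg; apply: (@dvdz_trans (gcdn d1 d2)); first by rewrite dvdzE dvdn_gcd g_d1.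
  by rewrite -eqz_mod_dvd !modz_nat eq_ab.
case=> x [y [ii' pp' xy]]; exists (x + a)%N; split; first exact: walk_cat ii' ij.
have -> : (x + a = y + b)%N by lia.
exact: walk_cat pp' pq.
Qed.

Lemma prod_strongly_connected : gcdn d1 d2 = 1%N -> strongly_connected prod_rel.
Proof.
move=> D1 [i p] [j q]; have [a ij] := sc1 i j; have [b pq] := sc2 p q.
have [|L Ls] := walks_same_length ij pq; first by rewrite D1 !modn1.
by exists L; apply/walk_prod.
Qed.

(* Walks back from [y] to [x] in the factors close up walks of lengths [0] mod [d1], resp. [d2]. *)
Lemma prod_walk_sym x y n : walk prod_rel x y n -> exists m, walk prod_rel y x m.
Proof.
case: x y => [i p] [j q] /walk_prod [/= ij pq].
have [a ji] := sc1 j i; have [b qp] := sc2 q p.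
have Da := dvdn_trans (dvdn_gcdl d1 d2) (gcd_dvdn_closed_walk gcd1 (walk_cat ji ij)).
have Db := dvdn_trans (dvdn_gcdr d1 d2) (gcd_dvdn_closed_walk gcd2 (walk_cat qp pq)).
have eq_ab : a = b %[mod gcdn d1 d2].
  by apply/eqP; rewrite -(eqn_modDr n); move: Da Db; rewrite /dvdn => /eqP-> /eqP->.
by have [m Lm] := walks_same_length ji qp eq_ab; exists m; apply/walk_prod.
Qed.

End ProductGraph.

Lemma sum_neq0 (I : finType) (M : nmodType) (F : I -> M) :
  (\sum_i F i != 0)%R -> exists i, (F i != 0)%R.
Proof.
move=> s_ne0; apply/existsP; apply: contraNT s_ne0; rewrite negb_exists => /forallP F0.
by apply/eqP/big1 => i _; apply/eqP/negbNE.
Qed.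

Lemma ffun_neq0 (I : finType) (M : nmodType) (x : {ffun I -> M}) :
  (x != 0)%R -> exists i, (x i != 0)%R.
Proof.
move=> x_ne0; apply/existsP; apply: contraNT x_ne0; rewrite negb_exists => /forallP x0.
by apply/eqP/ffunP=> i; rewrite ffunE; apply/eqP/negbNE.
Qed.

Section EvolutionAlgebra.
Local Open Scope ring_scope.
Variables (K : fieldType) (V : finType) (W : V -> V -> K).
Local Notation A := {ffun V -> K^o}.
Local Notation mul := (evo_mul W).

Definition unitv (i : V) : A := [ffun v => (v == i)%:R].
Definition wcol (i : V) : A := [ffun j => W j i].
Definition supported_on (C : pred V) (x : A) : Prop := forall v, ~~ C v -> x v = 0.
Definition spanned_by_cols (C : pred V) : Prop :=
  forall j, C j -> exists c : V -> K, unitv j = \sum_(i | C i) c i *: wcol i.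

Lemma evo_mulC x y : mul x y = mul y x.
Proof. by apply/ffunP=> j; rewrite !ffunE; apply: eq_bigr=> i _; rewrite (mulrC (x i)). Qed.

Lemma mul_unitv i x : mul (unitv i) x = x i *: wcol i.
Proof.
apply/ffunP=> j; rewrite !ffunE (bigD1 i) //= big1 ?addr0 => [|k /negbTE ki].
  by rewrite ffunE eqxx mul1r mulrC.
by rewrite ffunE ki mul0r mulr0.
Qed.

Lemma unitv_sum (x : A) : x = \sum_v x v *: unitv v.
Proof.
apply/ffunP=> j; rewrite sum_ffunE (bigD1 j) //= big1 ?addr0 => [|k /negbTE kj].
  by rewrite !ffunE eqxx; apply/esym/mulr1.
by rewrite !ffunE eq_sym kj; apply: mulr0.
Qed.

Lemma unitv_neq0 i : unitv i != 0.
Proof. by apply/eqP=> /ffunP/(_ i); rewrite !ffunE eqxx; apply/eqP; rewrite oner_eq0. Qed.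

Lemma subspace_sum (I : finType) (S : A -> Prop) (P : pred I) (F : I -> A) :
  is_subspace S -> (forall i, P i -> S (F i)) -> S (\sum_(i | P i) F i).
Proof. by case=> S0 SD _ SF; apply: big_ind. Qed.

Lemma subspaceZ_inv (S : A -> Prop) (a : K) x :
  is_subspace S -> a != 0 -> S (a *: x) -> S x.
Proof. by case=> _ _ SZ a_ne0 /(SZ a^-1); rewrite scalerA mulVf // scale1r. Qed.

(* [J] is kept abstract so that the whole algebra, [fun _ => True], is the case [C = predT]. *)
Section Block.
Variables (C : pred V) (J : A -> Prop).
Hypotheses (JC : forall x, J x <-> supported_on C x)
  (C_closed : forall i j, evo_edge W i j -> C i = C j)
  (C_connected : {in C &, forall i j, exists n, walk (evo_edge W) i j n})
  (C_spanned : spanned_by_cols C).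

Lemma supported_unitv i : C i -> J (unitv i).
Proof. by move=> Ci; apply/JC=> v; rewrite ffunE; case: eqP => // ->; rewrite Ci. Qed.

Lemma block_sqr_neq0 j : C j -> exists2 i, C i & mul (unitv i) (unitv i) != 0.
Proof.
move=> Cj; have [c cE] := C_spanned Cj.
have [i] : exists i, (if C i then c i *: wcol i else 0) != 0.
  by apply: sum_neq0; rewrite -big_mkcond -cE unitv_neq0.
case: ifP => [Ci ci_ne0|_]; last by rewrite eqxx.
exists i => //; rewrite mul_unitv ffunE eqxx scale1r.
by apply: contraNneq ci_ne0 => ->; rewrite scaler0.
Qed.

(* A nonzero element of an ideal yields a column [e_i^2], then, along the edges, all columns of
   the block, hence all [e_j] since the columns span them. *)
Lemma block_ideal_full S x : is_ideal_in mul J S -> S x -> x <> 0 -> forall y, J y -> S y.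
Proof.
move=> [SS SJ SM] Sx x_ne0; have [_ _ SZ] := SS.
have [i xi_ne0] := ffun_neq0 (introN eqP x_ne0).
have Ci : C i by apply: contraT => /(proj1 (JC x) (SJ x Sx)) xi0; rewrite xi0 eqxx in xi_ne0.
have Scol : S (wcol i).
  apply: (subspaceZ_inv SS xi_ne0); rewrite -mul_unitv.
  exact: (SM _ _ (supported_unitv Ci) Sx).1.
have Scols j : C j -> S (wcol j).
  move=> Cj; have [n ij] := C_connected Ci Cj.
  elim: ij Ci Scol {Cj} => // u v w m uv _ IH Cu Su; rewrite (C_closed uv) in Cu.
  apply: IH => //; apply: (subspaceZ_inv SS (introN eqP uv)).
  by rewrite -[W v u](ffunE (fun j => W j u)) -mul_unitv; apply: (SM _ _ (supported_unitv Cu) Su).1.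
have Sunit j : C j -> S (unitv j).
  by move=> Cj; have [c ->] := C_spanned Cj; apply: subspace_sum => // k /Scols /SZ.
move=> y Jy; rewrite (unitv_sum y); apply: subspace_sum => // v _.
case Cv: (C v); first exact/SZ/Sunit.
by rewrite (proj1 (JC y) Jy v) ?Cv // scale0r; case: SS.
Qed.

Lemma block_simple : (exists j, C j) -> simple_in mul J.
Proof.
case=> j Cj; split.
  have [i Ci sqr_ne0] := block_sqr_neq0 Cj.
  by exists (unitv i), (unitv i); split; [exact: supported_unitv..|exact/eqP].
move=> S S_ideal; have [[x [Sx x_ne0]]|S0] := pselect (exists x, S x /\ x <> 0).
  by right; apply: block_ideal_full Sx x_ne0.
by left=> x Sx; apply: contra_notP S0 => x_ne0; exists x.
Qed.

End Block.

Lemma supported_ideal (C : pred V) : (forall i j, evo_edge W i j -> C i -> C j) ->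
  is_ideal mul (supported_on C).
Proof.
move=> C_fwd; split; [split|done|].
- by move=> v _; rewrite ffunE.
- by move=> x y Cx Cy v Cv; rewrite ffunE Cx ?Cy ?addr0.
- by move=> a x Cx v Cv; rewrite ffunE Cx ?scaler0.
suff Cmul x y : supported_on C y -> supported_on C (mul x y).
  by move=> x y _ Cy; split; [|rewrite evo_mulC]; apply: Cmul.
move=> Cy v Cv; rewrite ffunE big1 // => i _.
have [->|Wvi] := eqVneq (W v i) 0; first by rewrite mul0r.
by rewrite Cy ?mulr0 //; apply: contra Cv; apply: C_fwd; apply/eqP.
Qed.

Lemma evolution_supported (C : pred V) : evolution_in mul (supported_on C).
Proof.
have unitv_enumE (c : 'I_#|C| -> K) t :
    (\sum_s c s *: unitv (enum_val s)) (enum_val t) = c t.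
  rewrite sum_ffunE (bigD1 t) //= big1 => [|s st]; rewrite !ffunE.
    by rewrite eqxx addr0; apply: mulr1.
  by rewrite (inj_eq enum_val_inj) eq_sym (negbTE st); apply: mulr0.
exists #|C|, (fun s => unitv (enum_val s)); split.
- move=> s v Cv; rewrite ffunE; case: eqP => // vs.
  by move: Cv (enum_valP s); rewrite vs unfold_in => /negbTE ->.
- by move=> c c0 t; rewrite -unitv_enumE c0 ffunE.
- move=> x Cx; exists (fun s => x (enum_val s)).
  rewrite {1}(unitv_sum x) (bigID C) /= [X in _ + X]big1 ?addr0 => [|v /Cx ->]; last exact: scale0r.
  exact: big_enum_val.
- by move=> s t st; rewrite mul_unitv ffunE (inj_eq enum_val_inj) (negbTE st) scale0r.
Qed.

Lemma direct_sum_blocks k (f : V -> 'I_k) : (forall i j, evo_edge W i j -> f i = f j) ->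
  direct_sum_decomposition mul (fun t => supported_on [pred v | f v == t]).
Proof.
move=> f_edge; split.
- by move=> t; apply: supported_ideal => i j /f_edge; rewrite /= => ->.
- move=> x; exists (fun t => [ffun v => if f v == t then x v else 0]); split.
    by move=> t v /negbTE; rewrite ffunE /= => ->.
  apply/ffunP=> v; rewrite sum_ffunE (bigD1 (f v)) //= ffunE eqxx big1 ?addr0 // => t tv.
  by rewrite ffunE eq_sym (negbTE tv).
- move=> y Cy y0 t; apply/ffunP=> v; rewrite ffunE.
  have [fvt|] := eqVneq (f v) t; last by move/Cy.
  have := congr1 (fun z : A => z v) y0; rewrite sum_ffunE ffunE (bigD1 t) //= big1 ?addr0 //.
  by move=> s st; apply: Cy; rewrite /= fvt eq_sym.
Qed.

Lemma spanned_restrict (C : pred V) : (forall i j, evo_edge W i j -> C i = C j) ->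
  spanned_by_cols predT -> spanned_by_cols C.
Proof.
move=> C_closed span j Cj; have [c /ffunP cE] := span j isT; exists c.
have W0 v i : C i != C v -> (c i *: wcol i) v = 0.
  rewrite !ffunE => Civ; apply/eqP; rewrite mulf_eq0; apply/orP; right.
  by apply: contraR Civ => /eqP/C_closed ->.
apply/ffunP=> v; move: (cE v); rewrite !sum_ffunE (bigID C) /=; case Cv: (C v).
  by rewrite [X in _ + X]big1 ?addr0 // => i /negbTE Ci; apply: W0; rewrite Ci Cv.
move=> _; rewrite ffunE big1 => [|i Ci]; last by apply: W0; rewrite Ci Cv.
by case: (v =P j) Cv => [->|_ _]; rewrite ?Cj.
Qed.
Lemma evo_simple_card_gt0 : evo_simple W -> (0 < #|V|)%N.
Proof.
case=> [[x [y [_ _ /eqP/ffun_neq0 [i _]]]] _].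
by apply/card_gt0P; exists i.
Qed.

Lemma evo_simple_spanned : evo_simple W -> spanned_by_cols predT.
Proof.
case=> [[x0 [y0 [_ _ xy0_ne0]]] ideals] j _.
pose S (z : A) := exists c : V -> K, z = \sum_i c i *: wcol i.
have S_mul x y : S (mul x y).
  exists (fun i => x i * y i); apply/ffunP=> v; rewrite sum_ffunE ffunE.
  by apply: eq_bigr => i _; rewrite !ffunE mulrC.
have S_ideal : is_ideal mul S.
  split; [split|done|by move=> x y _ _; split].
  - by exists (fun=> 0); rewrite big1 // => i _; rewrite scale0r.
  - move=> _ _ [c ->] [c' ->]; exists (fun i => c i + c' i).
    by rewrite -big_split; apply: eq_bigr => i _; rewrite scalerDl.
  - move=> a _ [c ->]; exists (fun i => a * c i).
    by rewrite scaler_sumr; apply: eq_bigr => i _; rewrite scalerA.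
case: (ideals S S_ideal) => [S0|/(_ (unitv j) I) [c ->]]; last by exists c.
by case: xy0_ne0; apply: S0.
Qed.

(* The elements supported on the vertices reachable from [i] form a nonzero ideal. *)
Lemma evo_simple_strongly_connected : evo_simple W -> strongly_connected (evo_edge W).
Proof.
case=> _ ideals i.
pose S (z : A) := forall v, z v != 0 -> exists n, walk (evo_edge W) i v n.
have S_ideal : is_ideal mul S.
  have S_mul x y : S y -> S (mul x y).
    move=> Sy v; rewrite ffunE => /sum_neq0 [k]; rewrite !mulf_eq0 !negb_or => /and3P [Wvk _ yk].
    by have [n ik] := Sy k yk; exists n.+1; apply: walk_rcons ik _; apply/eqP.
  split; [split|done|by move=> x y _ Sy; split; [|rewrite evo_mulC]; apply: S_mul].
  - by move=> v; rewrite ffunE eqxx.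
  - move=> x y Sx Sy v; rewrite ffunE; have [xv0|/Sx //] := eqVneq (x v) 0.
    by rewrite xv0 add0r => /Sy.
  - by move=> a x Sx v; rewrite ffunE mulf_eq0 negb_or => /andP [_ /Sx].
case: (ideals S S_ideal) => [S0|Sfull] j.
  have : S (unitv i).
    move=> v; rewrite ffunE; case: (v =P i) => [-> _|_]; last by rewrite eqxx.
    by exists 0%N; apply: walk0.
  by move/S0/eqP; rewrite (negbTE (unitv_neq0 i)).
by apply: (Sfull (unitv j) I); rewrite ffunE eqxx oner_neq0.
Qed.

Lemma spanned_in_edges : spanned_by_cols predT -> forall j, exists i, evo_edge W i j.
Proof.
move=> span j; have [c /ffunP /(_ j)] := span j isT; rewrite !ffunE eqxx sum_ffunE.
move=> c_j; have [|i] := @sum_neq0 _ _ (fun i => (c i *: wcol i) j).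
  by rewrite -c_j oner_neq0.
by rewrite !ffunE mulf_eq0 negb_or => /andP [_ /eqP]; exists i.
Qed.

Lemma evo_simple_of_strongly_connected : (0 < #|V|)%N -> spanned_by_cols predT ->
  strongly_connected (evo_edge W) -> evo_simple W.
Proof.
move=> /card_gt0P [j _] span sc.
by apply: (@block_simple predT) => //; exists j.
Qed.

Lemma evo_semisimple_blocks k (f : V -> 'I_k) :
  (forall i j, evo_edge W i j -> f i = f j) -> (forall t, exists v, f v = t) ->
  (forall i j, f i = f j -> exists n, walk (evo_edge W) i j n) ->
  spanned_by_cols predT -> evo_semisimple W.
Proof.
move=> f_edge f_surj f_conn span; exists k, (fun t => supported_on [pred v | f v == t]).
split=> [|t]; first exact: direct_sum_blocks.
split; last exact: evolution_supported.
have C_closed i j : evo_edge W i j -> (f i == t) = (f j == t) by move/f_edge ->.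
apply: (@block_simple [pred v | f v == t]) => //.
- by move=> i j /eqP fi /eqP fj; apply: f_conn; rewrite fi fj.
- exact: spanned_restrict.
- by have [v fv] := f_surj t; exists v; rewrite /= fv.
Qed.

Lemma connect_walk x y :
  connect (fun i j => W j i != 0) x y <-> exists n, walk (evo_edge W) x y n.
Proof.
split.
  case/connectP=> s; elim: s x => [|z s IH] x /=; first by move=> _ ->; exists 0%N; apply: walk0.
  by case/andP=> /eqP xz /IH /[apply] [[n zy]]; exists n.+1; apply: walkS zy.
case=> n; elim=> [v|u v w m /eqP uv _ IH]; first exact: connect0.
exact: connect_trans (connect1 uv) IH.
Qed.

Lemma evo_semisimple_of_walk_sym : spanned_by_cols predT ->
  (forall x y n, walk (evo_edge W) x y n -> exists m, walk (evo_edge W) y x m) ->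
  evo_semisimple W.
Proof.
move=> span walk_sym; pose e : rel V := fun i j => W j i != 0.
have e_sym : connect_sym e.
  by move=> x y; apply/idP/idP => /connect_walk [n /walk_sym yx]; apply/connect_walk.
have root_in v : fingraph.root e v \in roots e by rewrite unfold_in /roots (root_root e_sym).
pose f v := enum_rank_in (root_in v) (fingraph.root e v).
have f_root v : enum_val (f v) = fingraph.root e v by rewrite enum_rankK_in.
have eq_f i j : f i = f j -> connect e i j.
  by move/(congr1 enum_val); rewrite !f_root => /(fingraph.rootP e_sym).
apply: (evo_semisimple_blocks (f := f)) => //.
- move=> i j /eqP ij; apply/eqP; rewrite -(inj_eq enum_val_inj) !f_root.
  exact/eqP/(fingraph.rootP e_sym)/connect1.
- move=> t; exists (enum_val t); apply: enum_val_inj; rewrite f_root.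
  by have := enum_valP t; rewrite unfold_in => /eqP.
- by move=> i j /eq_f /connect_walk.
Qed.

Lemma gcd_closed_walks d : is_gcd_of (closed_path_length W) d ->
  is_gcd_of (closed_walk_length (evo_edge W)) d.
Proof.
have eq_closed m : closed_path_length W m <-> closed_walk_length (evo_edge W) m.
  split=> [[f [m_gt0 fm fe]]|[m_gt0 [v /walk_fun [f [f0 fm fe]]]]].
    by split=> //; exists (f 0%N); apply/walk_fun; exists f.
  by exists f; split=> //; rewrite fm f0.
case=> dvd_d d_max; split=> [m /eq_closed | g g_dvd]; first exact: dvd_d.
by apply: d_max => m /eq_closed; apply: g_dvd.
Qed.

End EvolutionAlgebra.

Section Tensor.
Local Open Scope ring_scope.
Variables (K : fieldType) (I1 I2 : finType) (W1 : I1 -> I1 -> K) (W2 : I2 -> I2 -> K).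
Local Notation WT := (evo_tensor W1 W2).

Lemma walk_tensor x y n : walk (evo_edge WT) x y n <->
  walk (prod_rel (evo_edge W1) (evo_edge W2)) x y n.
Proof.
have edgeE u v : evo_edge WT u v <-> prod_rel (evo_edge W1) (evo_edge W2) u v.
  rewrite /evo_edge /evo_tensor /prod_rel; split.
    by move=> W_ne0; split=> W0; apply: W_ne0; rewrite W0 ?mul0r ?mulr0.
  by case=> /eqP W1_ne0 /eqP W2_ne0; apply/eqP; rewrite mulf_neq0.
by split; apply: sub_walk => u v /edgeE.
Qed.

Lemma spanned_by_cols_tensor : spanned_by_cols W1 predT -> spanned_by_cols W2 predT ->
  spanned_by_cols WT predT.
Proof.
move=> span1 span2 [j1 j2] _.
have [c1 /ffunP E1] := span1 j1 isT; have [c2 /ffunP E2] := span2 j2 isT.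
exists (fun x => c1 x.1 * c2 x.2); apply/ffunP=> [[a b]].
move: (E1 a) (E2 b); rewrite !ffunE !sum_ffunE xpair_eqE -mulnb natrM => -> ->.
rewrite big_distrlr pair_big /=; apply: eq_bigr => -[i p] _.
by rewrite !ffunE /evo_tensor /=; apply: mulrACA.
Qed.

Variables (d1 d2 : nat).
Hypotheses (simple1 : evo_simple W1) (simple2 : evo_simple W2)
  (gcd1 : is_gcd_of (closed_path_length W1) d1) (gcd2 : is_gcd_of (closed_path_length W2) d2).

Let g1 := gcd_closed_walks gcd1.
Let g2 := gcd_closed_walks gcd2.
Let sc1 := evo_simple_strongly_connected simple1.
Let sc2 := evo_simple_strongly_connected simple2.
Let span1 := evo_simple_spanned simple1.
Let span2 := evo_simple_spanned simple2.
Let in1 := spanned_in_edges span1.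
Let in2 := spanned_in_edges span2.

Lemma evo_simple_tensorP : evo_simple WT <-> gcdn d1 d2 = 1%N.
Proof.
have [i0 _] := card_gt0P (evo_simple_card_gt0 simple1).
have [p0 _] := card_gt0P (evo_simple_card_gt0 simple2).
split=> [/evo_simple_strongly_connected scT | gcd_1].
  apply: (prod_strongly_connected_gcd g1 g2 i0 p0 in2) => x y.
  by have [n /walk_tensor] := scT x y; exists n.
apply: evo_simple_of_strongly_connected (spanned_by_cols_tensor span1 span2) _.
  by apply/card_gt0P; exists (i0, p0).
move=> x y; have [n xy] := prod_strongly_connected g1 g2 sc1 sc2 in1 in2 gcd_1 x y.
by exists n; apply/walk_tensor.
Qed.

Lemma evo_semisimple_tensor : evo_semisimple WT.
Proof.
apply: evo_semisimple_of_walk_sym (spanned_by_cols_tensor span1 span2) _ => x y n /walk_tensor xy.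
by have [m yx] := prod_walk_sym g1 g2 sc1 sc2 in1 in2 xy; exists m; apply/walk_tensor.
Qed.

End Tensor.

Theorem theorem4p3 (K : fieldType) (I1 I2 : finType)
    (W1 : I1 -> I1 -> K) (W2 : I2 -> I2 -> K) (d1 d2 : nat) :
  evo_simple W1 -> evo_simple W2 ->
  is_gcd_of (closed_path_length W1) d1 ->
  is_gcd_of (closed_path_length W2) d2 ->
  [/\ (evo_simple (evo_tensor W1 W2) <-> gcdn d1 d2 = 1%N),
      ((exists m1 m2, [/\ closed_path_length W1 m1, closed_path_length W2 m2
                        & coprime m1 m2]) -> evo_simple (evo_tensor W1 W2))
    & evo_semisimple (evo_tensor W1 W2)].
Proof.
move=> simple1 simple2 gcd1 gcd2.
have simpleT := evo_simple_tensorP simple1 simple2 gcd1 gcd2.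
split=> //; last exact: evo_semisimple_tensor simple1 simple2 gcd1 gcd2.
case=> m1 [m2 [m1_closed m2_closed coprime12]]; apply/simpleT/eqP.
rewrite -dvdn1 -(eqP coprime12) dvdn_gcd.
rewrite (dvdn_trans (dvdn_gcdl _ _) (gcd1.1 _ m1_closed)).
by rewrite (dvdn_trans (dvdn_gcdr _ _) (gcd2.1 _ m2_closed)).
Qed.
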